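(* Let $\Sigma=\{0,1\}$ and $(p_{ij})_{i,j\in\Sigma}$ a transition matrix with $p_{ij}\in(0,1)$ for all $i,j$ and $p_{ij}\ne\tfrac12$ for some $(i,j)$. For a probability distribution $\mu$ on $\Sigma$ let $B_n^\mu$ be the number of bucket operations of radix sort on $n$ i.i.d. strings from the Markov source with initial distribution $\mu$ and transition matrix $(p_{ij})$. Then $$\mathbb E[B_n^\mu]=\frac1H n\log n+O(n)\qquad(n\to\infty),$$ where the $O(n)$ error term is uniform in the initial distribution $\mu$.
   Context: Markov source: each string $\xi_1\xi_2\ldots$ has $\mathbb P(\xi_1=j)=\mu_j$ and $\mathbb P(\xi_{k+1}=j\mid\xi_k=i)=p_{ij}$; strings are independent. $B_n^\mu=\sum_{j=1}^nD_j$ with $D_j$ the smallest $k\ge0$ such that no other string shares its first $k$ symbols (external path length of the trie). $\pi_0=p_{10}/(p_{01}+p_{10})$, $\pi_1=p_{01}/(p_{01}+p_{10})$, $H_i=-\sum_jp_{ij}\log p_{ij}$, $H=\pi_0H_0+\pi_1H_1$. *)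

From HB Require Import structures.
From mathcomp Require Import all_boot all_order all_algebra.
From mathcomp Require Import all_classical all_reals all_analysis.
Set Implicit Arguments. Unset Strict Implicit. Unset Printing Implicit Defensive.
Import Order.TTheory GRing.Theory Num.Theory.
Local Open Scope classical_set_scope.
Local Open Scope ring_scope.

(* Alphabet Sigma = {0,1} is encoded as bool (false = 0, true = 1).
   A string is an infinite sequence  nat -> bool. *)

(* stationary probabilities *)
Definition pi0 {R : realType} (p : bool -> bool -> R) : R :=
  p true false / (p false true + p true false).
Definition pi1 {R : realType} (p : bool -> bool -> R) : R :=
  p false true / (p false true + p true false).

Definition Hi {R : realType} (p : bool -> bool -> R) (i : bool) : R :=
  - (p i false * ln (p i false) + p i true * ln (p i true)).

Definition entropy {R : realType} (p : bool -> bool -> R) : R :=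
  pi0 p * Hi p false + pi1 p * Hi p true.

Definition markov_prefix_prob {R : realType} (mu : bool -> R)
  (p : bool -> bool -> R) (k : nat) (w : nat -> bool) : R :=
  if k is k'.+1 then
    mu (w 0%N) * \prod_(l < k') p (w l) (w l.+1)
  else 1.

(* X : 'I_n -> T -> nat -> bool is a family of n independent strings, each
   emitted by the Markov source (mu, p), on the probability space (T, P):
   the coordinates are measurable and, for every k, the joint law of the
   length-k prefixes is the product of the Markov prefix laws. *)
Definition is_markov_strings {R : realType} (mu : bool -> R)
  (p : bool -> bool -> R) (n : nat) {d : measure_display}
  {T : measurableType d} (P : probability T R)
  (X : 'I_n -> T -> nat -> bool) : Prop :=
  (forall (j : 'I_n) (l : nat), measurable [set w | X j w l]) /\
  (forall (k : nat) (s : 'I_n -> nat -> bool),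
     P [set w | forall (j : 'I_n) (l : nat), (l < k)%N -> X j w l = s j l]
     = (\prod_(j < n) markov_prefix_prob mu p k (s j))%:E).

(* D_j = smallest k >= 0 such that no other string shares its first k
   symbols with string j (+oo if there is no such k). *)
Definition depth (R : realType) {T : Type} (n : nat)
  (X : 'I_n -> T -> nat -> bool) (j : 'I_n) (w : T) : \bar R :=
  ereal_inf [set (k%:R)%:E | k in
    [set k : nat | forall i : 'I_n, i != j ->
        exists l : nat, (l < k)%N /\ X i w l != X j w l]].

(* B_n = sum_j D_j : external path length of the trie = number of bucket
   operations of radix sort. *)
Definition bucket_ops (R : realType) {T : Type} (n : nat)
  (X : 'I_n -> T -> nat -> bool) (w : T) : \bar R :=
  (\sum_(j < n) depth R X j w)%E.

(* A string has depth greater than [k] exactly when another string shares its prefix of length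
   [k]. Summing the probabilities of these events, with [m(w)] the probability that a string
   starts with the word [w],
     E[B_n] = n * \sum_k \sum_(|w| = k) m(w) (1 - (1 - m(w))^(n-1)).
   Splitting the words after their first symbol turns the partial sums into a recursion along the
   chain. If [h] solves the Poisson equation [h_i - \sum_j p_ij h_j = H - H_i], the function
   [V(x, i) = (ln x + h_i) / H] drops by exactly one on average when a node of mass [x / n] splits
   ([lyap_drift]); perturbing [V] by bounded terms gives a supersolution and a subsolution of the
   recursion, so the partial sums stay within [O(1)] of [ln n / H], uniformly in the initial law. *)

From HB Require Import structures.
From mathcomp Require Import all_boot all_order all_algebra.
From mathcomp Require Import all_classical all_reals all_analysis.
From mathcomp Require Import ring lra measurable_realfun.
Set Implicit Arguments. Unset Strict Implicit. Unset Printing Implicit Defensive.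
Import Order.TTheory GRing.Theory Num.Theory.
Local Open Scope classical_set_scope.
Local Open Scope ring_scope.

Section Bernoulli.
Variable R : realFieldType.
Implicit Types (q : R) (m : nat).

Lemma onem_expn_ge q m : 0 <= q <= 1 -> 1 - m%:R * q <= (1 - q) ^+ m.
Proof.
move=> /andP[q0 q1]; elim: m => [|m IH]; first by rewrite expr0 mul0r subr0.
have q1' : 0 <= 1 - q by lra.
have := ler_wpM2l q1' IH; have : 0 <= m%:R * q * q by rewrite !mulr_ge0.
by rewrite exprS -natr1; nra.
Qed.

Lemma onem_expn_mul_le1 q m : 0 <= q <= 1 -> (1 - q) ^+ m * (1 + m%:R * q) <= 1.
Proof.
move=> /andP[q0 q1]; elim: m => [|m IH]; first by rewrite expr0 mul0r addr0 mul1r.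
have e0 : 0 <= (1 - q) ^+ m by apply: exprn_ge0; lra.
have m0 : 0 <= m%:R :> R by [].
have : (1 - q) * (1 + (m%:R + 1) * q) <= 1 + m%:R * q by nra.
move/(ler_wpM2l e0); rewrite exprS -natr1 => h.
by apply: le_trans IH; rewrite -mulrA mulrCA.
Qed.

End Bernoulli.

Lemma mul_ln_ge_N1 (R : realType) (m : R) : 0 < m -> -1 <= m * ln m.
Proof.
move=> m0; have := @ln_sublinear _ m^-1; rewrite invr_gt0 => /(_ m0); rewrite lnV ?posrE // => h.
have := ler_wpM2l (ltW m0) (ltW h); rewrite mulfV ?gt_eqF //; lra.
Qed.

Lemma exists_mul_expn_lt1 (R : archiRealFieldType) (a r : R) :
  0 < r < 1 -> exists K, a * r ^+ K < 1.
Proof.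
move=> /andP[r0 r1]; set K := (Num.truncn (a / (1 - r))).+1; exists K.
have r01 : 0 <= 1 - r <= 1 by apply/andP; split; lra.
have := onem_expn_mul_le1 K r01; rewrite opprB addrCA subrr addr0 => bern.
have := truncnS_gt (a / (1 - r)); rewrite -/K ltr_pdivrMr ?subr_gt0 // => aK.
have rK : 0 < r ^+ K by rewrite exprn_gt0.
apply: lt_le_trans bern; rewrite mulrC ltr_pM2l //; lra.
Qed.

Definition collision_prob {R : pzRingType} (n : nat) (q : R) := 1 - (1 - q) ^+ n.-1.

Section Collisions.
Variables (R : comPzRingType) (U : finType) (m : U -> R) (n : nat) (j : 'I_n).
Hypothesis m_sum1 : \sum_t m t = 1.

Definition collides (c : {ffun 'I_n -> U}) := [exists i, (i != j) && (c i == c j)].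

Lemma sum_prod_ffun1 : \sum_(c : {ffun 'I_n -> U}) \prod_i m (c i) = 1.
Proof.
rewrite -(bigA_distr_bigA (fun _ => m)) /=.
by rewrite (eq_bigr (fun _ => 1)) ?prodr_const ?expr1n // => i _.
Qed.

(* [\prod_i \sum_u avoid_weight t i u] is the mass of the colourings with [c j = t] and
   [c i <> t] for all [i <> j]. *)
Definition avoid_weight (t : U) (i : 'I_n) (u : U) : R :=
  if i == j then (u == t)%:R * m u else (u != t)%:R * m u.

Lemma sum_avoid_weight t i :
  \sum_u avoid_weight t i u = if i == j then m t else 1 - m t.
Proof.
rewrite /avoid_weight; case: (i == j).
  rewrite (bigD1 t) //= eqxx mul1r big1 ?addr0 // => u /negbTE ->; exact: mul0r.
rewrite -[X in _ = X - _]m_sum1 (bigD1 t) //= eqxx mul0r add0r [X in _ = X - _](bigD1 t) //=.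
by rewrite [m t + _]addrC addrK; apply: eq_bigr => u ->; rewrite mul1r.
Qed.

Lemma sum_prod_avoid_weight (c : {ffun 'I_n -> U}) :
  \sum_t \prod_i avoid_weight t i (c i) = (~~ collides c)%:R * \prod_i m (c i).
Proof.
rewrite (bigD1 (c j)) //= [X in _ + X]big1 ?addr0; last first.
  move=> t tn; rewrite (bigD1 j) //= /avoid_weight eqxx.
  by rewrite [c j == t]eq_sym (negbTE tn) !mul0r.
have [/existsP[i /andP[ij /eqP ci]]|ncol] /= := boolP (collides c).
  by rewrite mul0r (bigD1 i) //= /avoid_weight (negbTE ij) ci eqxx !mul0r.
rewrite mul1r; apply: eq_bigr => i _; rewrite /avoid_weight.
have [->|ij] := eqVneq i j; first by rewrite eqxx mul1r.
suff -> : c i != c j by rewrite mul1r.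
by apply: contra ncol => e; apply/existsP; exists i; rewrite ij e.
Qed.

Lemma sum_prod_noncolliding :
  \sum_(c | ~~ collides c) \prod_i m (c i) = \sum_t m t * (1 - m t) ^+ n.-1.
Proof.
transitivity (\sum_t \prod_i \sum_u avoid_weight t i u); last first.
  apply: eq_bigr => t _; under eq_bigr do rewrite sum_avoid_weight.
  rewrite (bigD1 j) //= eqxx; congr (_ * _).
  rewrite (eq_bigr (fun _ => 1 - m t)); last by move=> i /negbTE ->.
  by rewrite prodr_const cardC1 card_ord.
under [RHS]eq_bigr do rewrite (bigA_distr_bigA (avoid_weight _)).
rewrite exchange_big /= [RHS](eq_bigr _ (fun c _ => sum_prod_avoid_weight c)).
by rewrite big_mkcond /=; apply: eq_bigr => c _; case: (collides c); rewrite ?mul0r ?mul1r.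
Qed.

Lemma sum_prod_colliding :
  \sum_(c | collides c) \prod_i m (c i) = \sum_t m t * collision_prob n (m t).
Proof.
have := sum_prod_ffun1; rewrite (bigID collides) /= sum_prod_noncolliding => h.
under [RHS]eq_bigr do rewrite mulrBr mulr1.
by rewrite sumrB m_sum1 -[X in X - _]h addrK.
Qed.

End Collisions.

Section TupleSums.
Variables (R : nmodType) (T : finType).

Lemma sum_tuple0 (F : 0.-tuple T -> R) : \sum_t F t = F [tuple].
Proof.
rewrite (eq_bigr (fun=> F [tuple])); last by move=> t _; rewrite tuple0.
by rewrite sumr_const card_tuple expn0.
Qed.

Lemma sum_tupleS k (F : k.+1.-tuple T -> R) :
  \sum_t F t = \sum_(x : T) \sum_(t : k.-tuple T) F (cons_tuple x t).
Proof.
rewrite pair_big /= (reindex (fun x : T * k.-tuple T => cons_tuple x.1 x.2)) //=.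
exists (fun t => (thead t, behead_tuple t)) => [[x t] _|t _] /=.
  by congr pair; apply: val_inj.
by rewrite [RHS]tuple_eta; apply: val_inj.
Qed.

End TupleSums.

Section MarkovWords.
Variables (R : realType) (p : bool -> bool -> R) (mu : bool -> R).
Hypothesis p_gt0 : forall i j, 0 < p i j.
Hypothesis p_sum1 : forall i, p i false + p i true = 1.
Hypothesis mu_ge0 : forall i, 0 <= mu i.
Hypothesis mu_sum1 : mu false + mu true = 1.

Fixpoint word_prob (i : bool) (s : seq bool) : R :=
  if s is b :: s' then p i b * word_prob b s' else 1.

Definition prefix_prob {k} (t : k.-tuple bool) : R :=
  markov_prefix_prob mu p k (nth false t).

Lemma sum_word_prob k i : \sum_(t : k.-tuple bool) word_prob i t = 1.
Proof.
elim: k i => [|k IH] i; first by rewrite sum_tuple0.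
have e b : \sum_(t : k.-tuple bool) word_prob i (cons_tuple b t) = p i b.
  by rewrite -[RHS]mulr1 -(IH b) mulr_sumr.
by rewrite sum_tupleS big_bool /= !e addrC.
Qed.

Lemma prod_word_prob b (s : seq bool) :
  \prod_(l < size s) p (nth false (b :: s) l) (nth false s l) = word_prob b s.
Proof. by elim: s b => [|c s IH] b /=; rewrite ?big_ord0 // big_ord_recl IH. Qed.

Lemma prefix_prob_cons k b (t : k.-tuple bool) :
  prefix_prob (cons_tuple b t) = mu b * word_prob b t.
Proof.
rewrite /prefix_prob /markov_prefix_prob /=; congr (_ * _).
by rewrite -(prod_word_prob b t) size_tuple.
Qed.

Lemma sum_prefix_prob k : \sum_(t : k.-tuple bool) prefix_prob t = 1.
Proof.
case: k => [|k]; first by rewrite sum_tuple0.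
have e b : \sum_(t : k.-tuple bool) prefix_prob (cons_tuple b t) = mu b.
  by under eq_bigr do rewrite prefix_prob_cons; rewrite -mulr_sumr sum_word_prob mulr1.
by rewrite sum_tupleS big_bool /= !e addrC.
Qed.

Lemma prefix_prob_ge0 k (t : k.-tuple bool) : 0 <= prefix_prob t.
Proof.
rewrite /prefix_prob /markov_prefix_prob; case: k t => // k t.
by rewrite mulr_ge0 // prodr_ge0 // => l _; exact: ltW.
Qed.

Lemma prefix_prob_le1 k (t : k.-tuple bool) : prefix_prob t <= 1.
Proof.
rewrite -(sum_prefix_prob k) (bigD1 t) //= lerDl.
by apply: sumr_ge0 => u _; exact: prefix_prob_ge0.
Qed.

Definition level_cost n k :=
  \sum_(t : k.-tuple bool) prefix_prob t * collision_prob n (prefix_prob t).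

End MarkovWords.

Lemma ereal_inf_upclosed_nat (R : realType) (S : set nat) :
  (forall k k', (k <= k')%N -> S k -> S k') ->
  ereal_inf [set (k%:R)%:E | k in S] = (\sum_(k <oo) (\1_(~` S) k)%:E)%E :> \bar R.
Proof.
move=> S_up.
have partial N : (forall k, (k < N)%N -> ~ S k) ->
    (\sum_(0 <= k < N) (\1_(~` S) k)%:E)%E = (N%:R)%:E :> \bar R.
  move=> NS; rewrite big_nat_cond (eq_bigr (fun=> 1%E)); last first.
    by move=> k /andP[/andP[_ kN] _]; rewrite indicE mem_set //; exact: NS.
  by rewrite -big_nat_cond sumEFin sumr_const_nat subn0.
have [[k0 Sk0]|noS] := pselect (exists k, S k).
  have [m /asboolP Sm m_min] := @ex_minnP (fun k => `[< S k >]) (ex_intro _ k0 (asboolT Sk0)).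
  have m_min' k : S k -> (m <= k)%N by move=> Sk; apply: m_min; exact/asboolP.
  have -> : ereal_inf [set (k%:R)%:E | k in S] = (m%:R)%:E :> \bar R.
    apply/eqP; rewrite eq_le ereal_inf_lbound; last by exists m.
    by apply: le_ereal_inf_tmp => _ [k Sk <-]; rewrite lee_fin ler_nat m_min'.
  rewrite (nneseries_split 0 m) ?add0n; last by move=> k _; rewrite lee_fin indicE.
  rewrite partial; last by move=> k km /m_min'; rewrite leqNgt km.
  rewrite eseries0 ?adde0 // => k mk _.
  by rewrite indicE memNset //= => /(_ (S_up _ _ mk Sm)).
have -> : [set (k%:R)%:E | k in S] = set0 :> set (\bar R).
  by apply/seteqP; split => // x [k Sk _]; apply: noS; exists k.
rewrite ereal_inf0; apply/esym/cvg_lim => //.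
rewrite (_ : (fun N => _) = fun N => (N%:R)%:E); first exact/cvgenyP.
by apply/funext => N; rewrite partial // => k _ Sk; apply: noS; exists k.
Qed.

Lemma abse_nneseries_sub_le (R : realType) (a : nat -> R) (c e : R) :
  (forall k, 0 <= a k) ->
  (forall K, \sum_(k < K) a k <= c + e) ->
  (exists K, c - e <= \sum_(k < K) a k) ->
  (`| \sum_(k <oo) (a k)%:E - c%:E | <= e%:E)%E.
Proof.
move=> a_ge0 up [K lo].
have a_ge0' k : (0 <= (a k)%:E)%E by rewrite lee_fin.
set S := (\sum_(k <oo) _)%E.
have S_le : (S <= (c + e)%:E)%E.
  apply: lime_le; first exact: is_cvg_nneseries.
  by apply: nearW => N; rewrite sumEFin lee_fin big_mkord.
have S_ge : ((c - e)%:E <= S)%E.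
  by apply: le_trans (nneseries_lim_ge K _) => //; rewrite sumEFin lee_fin big_mkord.
have S_fin : S \is a fin_num.
  by rewrite fin_numE; apply/andP; split; apply/eqP => S_inf; rewrite S_inf in S_le S_ge.
rewrite -(fineK S_fin) -EFinB abse_EFin lee_fin ler_norml.
rewrite -(fineK S_fin) !lee_fin in S_le S_ge.
by apply/andP; split; lra.
Qed.

Section BucketOps.
Variables (R : realType) (p : bool -> bool -> R) (mu : bool -> R) (n : nat).
Variables (d : measure_display) (T : measurableType d) (P : probability T R).
Variable X : 'I_n -> T -> nat -> bool.
Hypothesis X_markov : is_markov_strings mu p P X.

Definition cylinder {k} (c : {ffun 'I_n -> k.-tuple bool}) : set T :=
  [set w | forall j l, (l < k)%N -> X j w l = nth false (c j) l].

Definition shared_prefix k (j : 'I_n) : set T :=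
  [set w | exists i, i != j /\ forall l, (l < k)%N -> X i w l = X j w l].

Lemma measurable_X_eq j l b : measurable [set w | X j w l = b].
Proof.
case: b; first exact: X_markov.1.
rewrite (_ : [set w | _] = ~` [set w | X j w l]); first exact/measurableC/X_markov.1.
by apply/seteqP; split => w /=; [move=> -> | case: (X j w l)].
Qed.

Lemma measurable_cylinder k (c : {ffun 'I_n -> k.-tuple bool}) : measurable (cylinder c).
Proof.
rewrite (_ : cylinder c = \bigcap_(j in [set: 'I_n]) \bigcap_(l in `I_k)
                            [set w | X j w l = nth false (c j) l]).
  apply: fin_bigcap_measurable => [|j _]; first exact: finite_finset.
  by apply: fin_bigcap_measurable => [|l _]; [exact: finite_II | exact: measurable_X_eq].
by apply/seteqP; split => w /= h j // l; apply: h.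
Qed.

Lemma cylinder_prob k (c : {ffun 'I_n -> k.-tuple bool}) :
  P (cylinder c) = (\prod_j prefix_prob p mu (c j))%:E.
Proof. exact: (X_markov.2 k (fun j => nth false (c j))). Qed.

Lemma shared_prefixE k j :
  shared_prefix k j = \bigcup_(c in [set` collides j]) @cylinder k c.
Proof.
apply/seteqP; split => w.
  case=> i [ij eq_ij]; exists [ffun i => [tuple X i w l | l < k]].
    rewrite /= /collides; apply/existsP; exists i; rewrite ij /=; apply/eqP.
    by apply: eq_from_tnth => l; rewrite !ffunE !tnth_mktuple eq_ij.
  move=> j' l lk; rewrite ffunE.
  by rewrite (nth_mktuple (fun l : 'I_k => X j' w l) false (Ordinal lk)).
case=> c /= /existsP[i /andP[ij /eqP e]] hw.
by exists i; split => // l lk; rewrite !hw // e.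
Qed.

Lemma trivIset_cylinder k (D : set {ffun 'I_n -> k.-tuple bool}) :
  trivIset D (@cylinder k).
Proof.
move=> c c' _ _ [w [h h']]; apply/ffunP => i; apply: eq_from_tnth => l.
by rewrite !(tnth_nth false) -h ?h' ?ltn_ord.
Qed.

Lemma measurable_shared_prefix k j : measurable (shared_prefix k j).
Proof.
rewrite shared_prefixE; apply: fin_bigcup_measurable => [|c _].
  exact: finite_finset.
exact: measurable_cylinder.
Qed.

Lemma shared_prefix_prob k j :
  P (shared_prefix k j) =
  (\sum_(c : {ffun 'I_n -> k.-tuple bool} | collides j c) \prod_i prefix_prob p mu (c i))%:E.
Proof.
rewrite shared_prefixE (measure_fin_bigcup _ finite_finset (@trivIset_cylinder k _)).
  2: by move=> c _; exact: measurable_cylinder.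
rewrite -(bigfs _ _ (r := enum {ffun 'I_n -> k.-tuple bool})) ?enum_uniq //; last first.
  by move=> c _; rewrite mem_enum.
rewrite big_enum_cond /= -sumEFin; apply: eq_bigr => c _; exact: cylinder_prob.
Qed.

Lemma depth_eq_series j w :
  depth R X j w = (\sum_(k <oo) (\1_(shared_prefix k j) w)%:E)%E.
Proof.
rewrite /depth ereal_inf_upclosed_nat.
  apply: eq_eseriesr => k _; rewrite !indicE; congr (_%:R%:E); congr nat_of_bool.
  apply/idP/idP => /set_mem => [nsep|[i [ij eq_ij]]]; apply/mem_set; last first.
    by move=> /(_ i ij) [l [lk]]; rewrite eq_ij ?eqxx.
  apply: contrapT => nsh; apply: nsep => i ij.
  apply: contrapT => neq; apply: nsh; exists i; split => // l lk.
  by apply/eqP; apply: contrapT => /negP ne; apply: neq; exists l.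
move=> k k' kk' sep i ij; have [l [lk ne]] := sep i ij.
by exists l; split => //; exact: leq_trans lk kk'.
Qed.

Lemma expected_bucket_ops_series :
  (\int[P]_w bucket_ops R X w = \sum_(k <oo) \sum_(j < n) P (shared_prefix k j))%E.
Proof.
have mind k j : measurable_fun [set: T] (fun w : T => (\1_(shared_prefix k j) w)%:E : \bar R).
  exact/measurable_EFinP/measurable_indic/measurable_shared_prefix.
have ind_ge0 k j w : (0 <= (\1_(shared_prefix k j) w)%:E :> \bar R)%E.
  by rewrite lee_fin indicE.
transitivity (\int[P]_w \sum_(k <oo) \sum_(j < n) (\1_(shared_prefix k j) w)%:E)%E.
  apply: eq_integral => w _; rewrite /bucket_ops.
  under eq_bigr do rewrite depth_eq_series.
  by rewrite nneseries_sum.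
rewrite integral_nneseries //; last 2 first.
- by move=> k; apply: emeasurable_sum => j.
- by move=> k w _; apply: sume_ge0.
apply: eq_eseriesr => k _; rewrite ge0_integral_sum //.
by apply: eq_bigr => j _; rewrite integral_indic ?setIT //; exact: measurable_shared_prefix.
Qed.

Hypothesis p_sum1 : forall i, p i false + p i true = 1.
Hypothesis mu_sum1 : mu false + mu true = 1.

Lemma expected_bucket_opsE :
  (\int[P]_w bucket_ops R X w = \sum_(k <oo) (n%:R * level_cost p mu n k)%:E)%E.
Proof.
rewrite expected_bucket_ops_series; apply: eq_eseriesr => k _.
under eq_bigr do rewrite shared_prefix_prob sum_prod_colliding ?sum_prefix_prob //.
by rewrite sumEFin sumr_const card_ord mulr_natl.
Qed.

End BucketOps.

Section Entropy.
Variables (R : realType) (p : bool -> bool -> R).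
Hypothesis p_bnd : forall i j, 0 < p i j < 1.
Hypothesis p_sum1 : forall i, p i false + p i true = 1.

Let p_gt0 i j : 0 < p i j. Proof. by case/andP: (p_bnd i j). Qed.
Let p_lt1 i j : p i j < 1. Proof. by case/andP: (p_bnd i j). Qed.

Definition pmax := Num.max (Num.max (p false false) (p false true))
                           (Num.max (p true false) (p true true)).
Definition pmin := Num.min (Num.min (p false false) (p false true))
                           (Num.min (p true false) (p true true)).

Lemma p_le_pmax i j : p i j <= pmax.
Proof. by rewrite /pmax; case: i; case: j; rewrite !le_max lexx ?orbT. Qed.

Lemma pmax_itv : 0 < pmax < 1.
Proof.
by rewrite (lt_le_trans (p_gt0 false false) (p_le_pmax _ _)) /pmax !gt_max !p_lt1.
Qed.

Lemma pmin_le_p i j : pmin <= p i j.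
Proof. by rewrite /pmin; case: i; case: j; rewrite !ge_min lexx ?orbT. Qed.

Lemma pmin_gt0 : 0 < pmin.
Proof. by rewrite /pmin !lt_min !p_gt0. Qed.

Lemma Hi_gt0 i : 0 < Hi p i.
Proof.
rewrite /Hi oppr_gt0.
have l0 : p i false * ln (p i false) < 0 by rewrite pmulr_rlt0 ?ln_lt0 ?p_gt0 ?p_lt1.
have l1 : p i true * ln (p i true) < 0 by rewrite pmulr_rlt0 ?ln_lt0 ?p_gt0 ?p_lt1.
lra.
Qed.

Lemma entropy_gt0 : 0 < entropy p.
Proof.
have den0 : 0 < p false true + p true false by rewrite addr_gt0.
by rewrite /entropy /pi0 /pi1 addr_gt0 // mulr_gt0 ?divr_gt0 ?Hi_gt0.
Qed.

Definition poisson_sol (i : bool) : R :=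
  if i then 0 else (Hi p true - Hi p false) / (p false true + p true false).

Lemma poisson_solP i :
  poisson_sol i - (p i false * poisson_sol false + p i true * poisson_sol true)
  = entropy p - Hi p i.
Proof.
have den0 : p false true + p true false != 0 by rewrite gt_eqF // addr_gt0.
have s0 := p_sum1 false; have s1 := p_sum1 true.
rewrite /poisson_sol /entropy /pi0 /pi1; case: i => /=; first by field.
by rewrite (_ : p false false = 1 - p false true); [field | lra].
Qed.

Definition hbound := `|poisson_sol false|.

Lemma poisson_sol_bound i : `|poisson_sol i| <= hbound.
Proof. by case: i; rewrite /hbound /= ?normr0. Qed.

Definition lyap (x : R) (i : bool) := (ln x + poisson_sol i) / entropy p.

Lemma lyap_drift x i : 0 < x ->
  p i false * lyap (x * p i false) false + p i true * lyap (x * p i true) true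
  = lyap x i - 1.
Proof.
move=> x0; have H0 : entropy p != 0 by rewrite gt_eqF // entropy_gt0.
have hP := poisson_solP i; have si := p_sum1 i.
have hi : p i false * ln (p i false) + p i true * ln (p i true) = - Hi p i.
  by rewrite /Hi opprK.
rewrite /lyap !lnM ?posrE //.
transitivity (((p i false + p i true) * ln x
   + (p i false * ln (p i false) + p i true * ln (p i true))
   + (p i false * poisson_sol false + p i true * poisson_sol true)) / entropy p).
  by field.
have -> : p i false * poisson_sol false + p i true * poisson_sol true
          = poisson_sol i - entropy p + Hi p i by lra.
by rewrite si hi; field.
Qed.

End Entropy.

Section SubtrieCost.
Variables (R : realType) (p : bool -> bool -> R).
Hypothesis p_bnd : forall i j, 0 < p i j < 1.
Hypothesis p_sum1 : forall i, p i false + p i true = 1.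
Variable n : nat.
Hypothesis n_ge2 : (2 <= n)%N.
Implicit Types (q x y m : R) (i j b : bool).

Let p_gt0 i j : 0 < p i j. Proof. by case/andP: (p_bnd i j). Qed.
Let H_gt0 : 0 < entropy p. Proof. exact: entropy_gt0. Qed.
Let n_gt0 : 0 < n%:R :> R. Proof. by rewrite ltr0n; case: n n_ge2. Qed.
Let ln_n_ge0 : 0 <= ln (n%:R : R). Proof. by rewrite ln_ge0 // ler1n; case: n n_ge2. Qed.
Let hbound_ge0 : 0 <= hbound p. Proof. exact: normr_ge0. Qed.
Let divH_ge0 a : 0 <= a -> 0 <= a / entropy p.
Proof. by move=> a0; rewrite divr_ge0 // ltW. Qed.

Local Notation hit := (@collision_prob R n).

Lemma hit_ge0 q : 0 <= q <= 1 -> 0 <= hit q.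
Proof. by move=> /andP[q0 q1]; rewrite subr_ge0 exprn_ile1 //; lra. Qed.

Lemma hit_le1 q : 0 <= q <= 1 -> hit q <= 1.
Proof. by move=> /andP[q0 q1]; rewrite lerBlDr lerDl exprn_ge0 // subr_ge0. Qed.

Lemma hit_le q : 0 <= q <= 1 -> hit q <= n%:R * q.
Proof.
move=> q01; have := onem_expn_ge n.-1 q01; have /andP[q0 _] := q01.
have : (n.-1)%:R * q <= n%:R * q by rewrite ler_wpM2r // ler_nat leq_pred.
rewrite /collision_prob; lra.
Qed.

Lemma hit_ge q : 0 < q <= 1 -> 1 <= n%:R * q -> 1 - 2 / (n%:R * q) <= hit q.
Proof.
move=> /andP[q0 q1] nq1.
have q01 : 0 <= q <= 1 by rewrite q1 ltW.
have := onem_expn_mul_le1 n.-1 q01.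
have nE : n%:R = (n.-1)%:R + 1 :> R by rewrite natr1 prednK //; case: n n_ge2.
have m1 : 1 <= (n.-1)%:R :> R by rewrite ler1n -ltnS prednK //; case: n n_ge2.
have e0 : 0 <= (1 - q) ^+ n.-1 by rewrite exprn_ge0 //; lra.
set m := (n.-1)%:R in nE m1 *; set e := (1 - q) ^+ _ in e0 * => bern.
have : e * (n%:R * q) <= 2 by rewrite nE; nra.
rewrite /collision_prob -/e -ler_pdivlMr; lra.
Qed.

Lemma mulp_itv q i j : 0 < q <= 1 -> 0 < q * p i j <= 1.
Proof.
move=> /andP[q0 q1]; have /andP[p0 p1] := p_bnd i j.
by rewrite mulr_gt0 //= mulr_ile1 //; lra.
Qed.

Fixpoint subtrie_cost (K : nat) (q : R) (i : bool) : R :=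
  if K is K'.+1 then
    hit q + (p i false * subtrie_cost K' (q * p i false) false +
             p i true * subtrie_cost K' (q * p i true) true)
  else 0.

Lemma subtrie_cost_ge0 K q i : 0 <= q <= 1 -> 0 <= subtrie_cost K q i.
Proof.
elim: K q i => [|K IH] q i q01 //=.
have qp j : 0 <= q * p i j <= 1.
  have /andP[q0 q1] := q01; have /andP[p0 p1] := p_bnd i j.
  by rewrite mulr_ge0 ?mulr_ile1 //; lra.
by rewrite addr_ge0 ?hit_ge0 // addr_ge0 // mulr_ge0 ?IH // ltW.
Qed.

Definition inv_gap := (1 - pmax p)^-1.
Definition upper_shift := inv_gap + (hbound p - ln (pmin p)) / entropy p.
Definition cost_upper (x : R) (i : bool) :=
  if 1 <= x then lyap p x i + upper_shift else inv_gap * x.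

Lemma inv_gap_gt0 : 0 < inv_gap.
Proof. by rewrite invr_gt0 subr_gt0; case/andP: (pmax_itv p_bnd). Qed.

Lemma inv_gapE : inv_gap * (1 - pmax p) = 1.
Proof. by rewrite mulVf // gt_eqF // subr_gt0; case/andP: (pmax_itv p_bnd). Qed.

Lemma ln_pmin_le0 : ln (pmin p) <= 0.
Proof.
by rewrite ln_le0 // (le_trans (pmin_le_p p false false)) // ltW; case/andP: (p_bnd false false).
Qed.

Lemma lyap_ge x i : 1 <= x -> - hbound p / entropy p <= lyap p x i.
Proof.
move=> x1; have := ln_ge0 x1; have /ler_normlP[hl _] := poisson_sol_bound p i.
by move=> lnx; rewrite /lyap ler_pM2r ?invr_gt0 //; lra.
Qed.

Lemma cost_upper_ge0 x i : 0 < x -> 0 <= cost_upper x i.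
Proof.
move=> x0; rewrite /cost_upper; case: ifP => x1; last by rewrite mulr_ge0 // ltW // inv_gap_gt0.
have : 0 <= - ln (pmin p) / entropy p.
  by apply: divr_ge0; [rewrite oppr_ge0 ln_pmin_le0 | exact: ltW].
have := lyap_ge i x1; have := inv_gap_gt0.
rewrite /upper_shift mulrBl; lra.
Qed.

Lemma cost_upper_step x i j : 1 <= x ->
  cost_upper (x * p i j) j <= lyap p (x * p i j) j + upper_shift.
Proof.
move=> x1; rewrite /cost_upper; case: ifP => // xp1.
have /ler_normlP[hl _] := poisson_sol_bound p j.
have lnp : ln (pmin p) <= ln (p i j) by rewrite ler_ln ?posrE ?pmin_gt0 ?pmin_le_p.
have lnx : 0 <= ln x := ln_ge0 x1.
have lnxp : ln (x * p i j) = ln x + ln (p i j).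
  by apply: lnM; rewrite posrE // (lt_le_trans ltr01 x1).
have : inv_gap * (x * p i j) <= inv_gap by rewrite ger_pMr ?inv_gap_gt0 // ltW // ltNge xp1.
have : 0 <= (ln x + ln (p i j) + poisson_sol p j + hbound p - ln (pmin p)) / entropy p.
  by apply: divH_ge0; lra.
rewrite /lyap /upper_shift lnxp; set a := (_ + _ + _ + _ - _) / _.
have -> : (ln x + ln (p i j) + poisson_sol p j) / entropy p +
    (inv_gap + (hbound p - ln (pmin p)) / entropy p) = inv_gap + a by rewrite /a; ring.
lra.
Qed.

Lemma cost_upper_super q i : 0 < q <= 1 ->
  hit q + (p i false * cost_upper (n%:R * q * p i false) false +
           p i true * cost_upper (n%:R * q * p i true) true) <= cost_upper (n%:R * q) i.
Proof.
move=> /andP[q0 q1]; have q01 : 0 <= q <= 1 by rewrite ltW.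
have x0 : 0 < n%:R * q by rewrite mulr_gt0.
have si := p_sum1 i; have /andP[pmax0 pmax1] := pmax_itv p_bnd.
rewrite [X in _ <= X]/cost_upper; case: ifP => x1.
  have U0 := ler_wpM2l (ltW (p_gt0 i false)) (cost_upper_step i false x1).
  have U1 := ler_wpM2l (ltW (p_gt0 i true)) (cost_upper_step i true x1).
  have := lyap_drift p_bnd p_sum1 i x0; have := hit_le1 q01.
  have : p i false * upper_shift + p i true * upper_shift = upper_shift.
    by rewrite -mulrDl si mul1r.
  lra.
have x1' : n%:R * q < 1 by rewrite ltNge x1.
have small j : p i j * cost_upper (n%:R * q * p i j) j
               <= p i j * (inv_gap * (n%:R * q) * pmax p).
  have xp1 : n%:R * q * p i j < 1.
    by apply: le_lt_trans x1'; rewrite ger_pMr // ltW // (andP (p_bnd i j)).2.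
  rewrite /cost_upper (leNgt 1) xp1 /=; apply: ler_wpM2l; first exact: ltW.
  rewrite !mulrA; apply: ler_wpM2l; last exact: p_le_pmax.
  by apply/mulr_ge0/ltW/q0/mulr_ge0 => //; exact/ltW/inv_gap_gt0.
have := small false; have := small true; have := hit_le q01.
have : p i false * (inv_gap * (n%:R * q) * pmax p) + p i true * (inv_gap * (n%:R * q) * pmax p)
       = inv_gap * (n%:R * q) * pmax p by rewrite -mulrDl si mul1r.
have : inv_gap * (n%:R * q) = n%:R * q + inv_gap * (n%:R * q) * pmax p.
  by rewrite /inv_gap; field; rewrite subr_eq0 gt_eqF.
lra.
Qed.

Lemma subtrie_cost_le_upper K q i : 0 < q <= 1 ->
  subtrie_cost K q i <= cost_upper (n%:R * q) i.
Proof.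
elim: K q i => [|K IH] q i q01 /=.
  by apply: cost_upper_ge0; rewrite mulr_gt0 //; case/andP: q01.
apply: le_trans (cost_upper_super i q01); rewrite lerD2l.
by apply: lerD; rewrite -mulrA ler_wpM2l ?IH ?mulp_itv // ltW.
Qed.

Definition upper_err := hbound p / entropy p + upper_shift.

Lemma upper_shift_ge_inv_gap : inv_gap <= upper_shift.
Proof.
by rewrite /upper_shift lerDl divH_ge0 //; have := ln_pmin_le0; have := hbound_ge0; lra.
Qed.

Lemma upper_err_ge0 : 0 <= upper_err.
Proof.
have := upper_shift_ge_inv_gap; have := inv_gap_gt0.
have := divH_ge0 hbound_ge0.
rewrite /upper_err; lra.
Qed.

Lemma cost_upper_le x y i : 0 < x <= y -> 1 <= y ->
  cost_upper x i <= ln y / entropy p + upper_err.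
Proof.
move=> /andP[x0 xy] y1; have lny := divH_ge0 (ln_ge0 y1).
have hb := divH_ge0 hbound_ge0.
rewrite /cost_upper /upper_err; case: ifP => x1; last first.
  have : inv_gap * x <= inv_gap by rewrite ger_pMr ?inv_gap_gt0 // ltW // ltNge x1.
  have := upper_shift_ge_inv_gap; lra.
have /ler_normlP[_ hu] := poisson_sol_bound p i.
have x_pos : x \in Num.pos by rewrite posrE (lt_le_trans ltr01 x1).
have y_pos : y \in Num.pos by rewrite posrE (lt_le_trans ltr01 y1).
have lnxy : ln x <= ln y by rewrite ler_ln.
have : lyap p x i <= (ln y + hbound p) / entropy p.
  by rewrite /lyap ler_pM2r ?invr_gt0 //; lra.
rewrite mulrDl; lra.
Qed.

Lemma mul_subtrie_cost_le K m b : 0 <= m <= 1 ->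
  m * subtrie_cost K m b <= m * (ln n%:R / entropy p + upper_err).
Proof.
move=> /andP[m0 m1]; have [->|m_neq0] := eqVneq m 0; first by rewrite !mul0r.
have m_gt0 : 0 < m by rewrite lt_neqAle eq_sym m_neq0.
apply: ler_wpM2l => //; apply: le_trans (subtrie_cost_le_upper _ _ _) _; first by rewrite m_gt0.
apply: cost_upper_le; last by rewrite ler1n; case: n n_ge2.
by rewrite mulr_gt0 //= ler_piMr // ltW.
Qed.

(* [slack] absorbs the error [2 / x] of [hit_ge] at every level; the factor [inv_gap] makes it
   shrink by at least that much when the mass is multiplied by some [p i j <= pmax]. *)
Definition slack (y : R) := if 1 <= y then 2 * inv_gap * (2 - y^-1) else 0.

Lemma slack_ge0 y : 0 <= slack y.
Proof.
rewrite /slack; case: ifP => // y1; have := inv_gap_gt0.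
have : y^-1 <= 1 by rewrite invf_le1 //; lra.
by move=> ? ?; rewrite mulr_ge0 ?mulr_ge0 //; lra.
Qed.

Lemma slack_le y : slack y <= 4 * inv_gap.
Proof.
rewrite /slack; case: ifP => [y1|_]; last by have := inv_gap_gt0; lra.
have : 0 <= y^-1 by rewrite invr_ge0; lra.
have := inv_gap_gt0 => ? ?; have : 0 <= inv_gap * y^-1 by rewrite mulr_ge0 //; lra.
lra.
Qed.

Lemma slack_step x i j : 1 <= x -> slack (x * p i j) <= slack x - 2 / x.
Proof.
move=> x1; have /andP[p0 p1] := p_bnd i j; have /andP[pmax0 pmax1] := pmax_itv p_bnd.
have u0 : 0 < x^-1 by rewrite invr_gt0; lra.
have u1 : x^-1 <= 1 by rewrite invf_le1 //; lra.
have c0 := inv_gap_gt0; have ce := inv_gapE; have cu1 : 1 <= inv_gap by nra.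
rewrite /slack x1; case: ifP => xp1; last first.
  have : 0 <= (inv_gap - 1) * (2 - x^-1) by rewrite mulr_ge0 //; lra.
  by rewrite mulrC; nra.
rewrite invfM; set u := x^-1 in u0 u1 *; set w := (p i j)^-1.
have pw : p i j * w = 1 by rewrite mulfV // gt_eqF.
have pr := p_le_pmax p i j.
have w2 : 2 - pmax p <= w.
  rewrite -(ler_pM2l p0) pw.
  have : 0 <= (2 - pmax p) * (pmax p - p i j) by rewrite mulr_ge0 //; lra.
  nra.
have : 0 <= inv_gap * u * (w - 2 + pmax p) by rewrite !mulr_ge0 //; lra.
have : inv_gap * u * (1 - pmax p) = u by rewrite -mulrA [u * _]mulrC mulrA ce mul1r.
rewrite mulrC; nra.
Qed.

Definition cost_lower x i := lyap p x i - hbound p / entropy p - slack x.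

Lemma cost_lower_le0 x i : 0 < x < 1 -> cost_lower x i <= 0.
Proof.
move=> /andP[x0 x1]; rewrite /cost_lower /slack (leNgt 1) x1 subr0 subr_le0.
have /ler_normlP[_ hu] := poisson_sol_bound p i.
have : ln x < 0 by rewrite ln_lt0 // x0.
by move=> lnx; rewrite /lyap ler_pM2r ?invr_gt0 //; lra.
Qed.

Lemma cost_lower_sub q i : 0 < q <= 1 -> 1 <= n%:R * q ->
  cost_lower (n%:R * q) i <= hit q + (p i false * cost_lower (n%:R * q * p i false) false +
                                      p i true * cost_lower (n%:R * q * p i true) true).
Proof.
move=> q01 x1; have x0 : 0 < n%:R * q by rewrite (lt_le_trans ltr01).
have step j : p i j * (lyap p (n%:R * q * p i j) j + (- hbound p / entropy p
      - slack (n%:R * q) + 2 / (n%:R * q))) <= p i j * cost_lower (n%:R * q * p i j) j.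
  apply: ler_wpM2l; first exact: ltW.
  by have := slack_step i j x1; rewrite /cost_lower; lra.
have := step false; have := step true.
have := lyap_drift p_bnd p_sum1 i x0; have := hit_ge q01 x1.
set c := - hbound p / entropy p - slack (n%:R * q) + 2 / (n%:R * q).
have : p i false * c + p i true * c = c by rewrite -mulrDl p_sum1 mul1r.
rewrite /cost_lower /c; lra.
Qed.

Lemma cost_lower_le_subtrie_cost K q i : 0 < q <= 1 ->
  n%:R * q * pmax p ^+ K < 1 -> cost_lower (n%:R * q) i <= subtrie_cost K q i.
Proof.
elim: K q i => [|K IH] q i q01 small; have /andP[q0 q1] := q01.
all: have [x1|x1] := ltP (n%:R * q) 1; first by apply: (@le_trans _ _ 0);
  [apply: cost_lower_le0; rewrite mulr_gt0 | apply: subtrie_cost_ge0; rewrite ltW].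
  by move: small; rewrite expr0 mulr1 ltNge x1.
have step j : p i j * cost_lower (n%:R * q * p i j) j <= p i j * subtrie_cost K (q * p i j) j.
  rewrite -mulrA; apply: ler_wpM2l; first exact: ltW.
  apply: IH; first exact: mulp_itv.
  apply: le_lt_trans small; rewrite mulrA exprS mulrA ler_pM2r ?exprn_gt0 //.
    by rewrite ler_pM2l ?mulr_gt0 // p_le_pmax.
  by case/andP: (pmax_itv p_bnd).
apply: le_trans (cost_lower_sub i q01 x1) _.
by rewrite /= lerD2l; apply: lerD; apply: step.
Qed.

Definition lower_err := (1 + 2 * hbound p) / entropy p + 4 * inv_gap.

Lemma lower_err_ge0 : 0 <= lower_err.
Proof.
have := inv_gap_gt0; have : 0 <= (1 + 2 * hbound p) / entropy p.
  by apply: divH_ge0; have := hbound_ge0; lra.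
rewrite /lower_err; lra.
Qed.

Lemma mul_cost_lower_ge m b : 0 < m <= 1 ->
  m * ln n%:R / entropy p - lower_err <= m * cost_lower (n%:R * m) b.
Proof.
move=> /andP[m0 m1]; have mlnm := mul_ln_ge_N1 m0.
have /ler_normlP[hl _] := poisson_sol_bound p b.
have h_ge : - hbound p <= poisson_sol p b by lra.
have mh := ler_wpM2l (ltW m0) h_ge.
have mhb : m * hbound p <= hbound p by rewrite ler_piMl.
have msl : m * slack (n%:R * m) <= 4 * inv_gap.
  by apply: le_trans (slack_le (n%:R * m)); rewrite ler_piMl ?slack_ge0.
have : 0 <= (m * ln m + m * poisson_sol p b - m * hbound p + 1 + 2 * hbound p) / entropy p.
  by apply: divH_ge0; lra.
rewrite /cost_lower /lyap /lower_err lnM ?posrE //; lra.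
Qed.

Lemma mul_subtrie_cost_ge K m b : 0 <= m <= 1 -> n%:R * pmax p ^+ K < 1 ->
  m * ln n%:R / entropy p - lower_err <= m * subtrie_cost K m b.
Proof.
move=> /andP[m0 m1] small; have [->|m_neq0] := eqVneq m 0.
  by rewrite !mul0r sub0r oppr_le0 lower_err_ge0.
have m_gt0 : 0 < m by rewrite lt_neqAle eq_sym m_neq0.
apply: le_trans (mul_cost_lower_ge _ _) _; first by rewrite m_gt0.
apply: ler_wpM2l => //; apply: cost_lower_le_subtrie_cost; first by rewrite m_gt0.
apply: le_lt_trans small; rewrite -mulrA; apply: ler_wpM2l; first exact: ltW.
by rewrite ler_piMl // exprn_ge0 // ltW //; case/andP: (pmax_itv p_bnd).
Qed.

Definition word_cost k q i :=
  \sum_(t : k.-tuple bool) word_prob p i t * hit (q * word_prob p i t).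

Lemma word_costS k q i : word_cost k.+1 q i =
  p i false * word_cost k (q * p i false) false + p i true * word_cost k (q * p i true) true.
Proof.
rewrite /word_cost sum_tupleS big_bool addrC !mulr_sumr /=.
by congr (_ + _); apply: eq_bigr => t _; rewrite !mulrA.
Qed.

Lemma subtrie_costE K q i : subtrie_cost K q i = \sum_(k < K) word_cost k q i.
Proof.
elim: K q i => [|K IH] q i; first by rewrite big_ord0.
rewrite big_ord_recl /= {1}/word_cost sum_tuple0 /= mul1r mulr1; congr (_ + _).
by under eq_bigr do rewrite word_costS; rewrite big_split /= -!mulr_sumr !IH.
Qed.

Variable mu : bool -> R.
Hypothesis mu_ge0 : forall i, 0 <= mu i.
Hypothesis mu_sum1 : mu false + mu true = 1.

Lemma mu_itv b : 0 <= mu b <= 1.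
Proof. by rewrite mu_ge0; have := mu_ge0 (~~ b); case: b mu_sum1 => /=; lra. Qed.

Lemma sum_level_costE K : \sum_(k < K.+1) level_cost p mu n k =
  1 + (mu false * subtrie_cost K (mu false) false + mu true * subtrie_cost K (mu true) true).
Proof.
rewrite big_ord_recl; congr (_ + _).
  rewrite /level_cost sum_tuple0 /prefix_prob /= mul1r /collision_prob subrr.
  by case: n n_ge2 => [|[|m]] // _; rewrite expr0n /= subr0.
rewrite !subtrie_costE !mulr_sumr -big_split /=; apply: eq_bigr => k _.
rewrite /level_cost sum_tupleS big_bool addrC /word_cost !mulr_sumr.
by congr (_ + _); apply: eq_bigr => t _; rewrite prefix_prob_cons !mulrA.
Qed.

Lemma level_cost_ge0 k : 0 <= level_cost p mu n k.
Proof.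
apply: sumr_ge0 => t _; rewrite mulr_ge0 ?prefix_prob_ge0 ?hit_ge0 //.
by rewrite prefix_prob_ge0 ?prefix_prob_le1.
Qed.

Lemma sum_level_cost_le K : \sum_(k < K) n%:R * level_cost p mu n k <=
  n%:R * ln n%:R / entropy p + n%:R * (1 + upper_err).
Proof.
rewrite -mulr_sumr -mulrA -mulrDr; apply: ler_wpM2l; first exact: ltW.
have lnH := divH_ge0 ln_n_ge0; have := upper_err_ge0.
case: K => [|K]; first by rewrite big_ord0; lra.
rewrite sum_level_costE.
have := mul_subtrie_cost_le K false (mu_itv false).
have := mul_subtrie_cost_le K true (mu_itv true).
have : mu false * (ln n%:R / entropy p + upper_err) + mu true * (ln n%:R / entropy p + upper_err)
  = ln n%:R / entropy p + upper_err by rewrite -mulrDl mu_sum1 mul1r.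
lra.
Qed.

Lemma sum_level_cost_ge : exists K, n%:R * ln n%:R / entropy p - n%:R * (2 * lower_err) <=
  \sum_(k < K) n%:R * level_cost p mu n k.
Proof.
have [K small] := exists_mul_expn_lt1 n%:R (pmax_itv p_bnd); exists K.+1.
rewrite -mulr_sumr sum_level_costE -mulrA -mulrBr; apply: ler_wpM2l; first exact: ltW.
have := mul_subtrie_cost_ge false (mu_itv false) small.
have := mul_subtrie_cost_ge true (mu_itv true) small.
have : mu false * ln n%:R / entropy p + mu true * ln n%:R / entropy p = ln n%:R / entropy p.
  by rewrite -!mulrA -mulrDl mu_sum1 mul1r.
lra.
Qed.

End SubtrieCost.

Theorem theorem5p1 (R : realType) (p : bool -> bool -> R) :
  (forall i j, 0 < p i j < 1) ->
  (forall i, p i false + p i true = 1) ->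
  (exists i j, p i j != 2^-1) ->
  exists (C : R) (N : nat), forall n : nat, (N <= n)%N ->
  forall mu : bool -> R, (forall i, 0 <= mu i) -> mu false + mu true = 1 ->
  forall (d : measure_display) (T : measurableType d) (P : probability T R)
         (X : 'I_n -> T -> nat -> bool),
  is_markov_strings mu p P X ->
  (`| (\int[P]_w bucket_ops R X w) - ((n%:R * ln (n%:R)) / entropy p)%:E |
     <= (C * n%:R)%:E)%E.
Proof.
(* The O(n) bound holds for every chain; the hypothesis excluding [p_ij = 1/2] is only needed
   for the finer expansion of the paper. *)
move=> p_bnd p_sum1 _.
exists (1 + upper_err p + 2 * lower_err p), 2%N => n n_ge2 mu mu_ge0 mu_sum1 d T P X X_markov.
rewrite (expected_bucket_opsE X_markov p_sum1 mu_sum1).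
have n_ge0 : 0 <= n%:R :> R by [].
have Ue := upper_err_ge0 p_bnd; have Le := lower_err_ge0 p_bnd.
apply: abse_nneseries_sub_le => [k|K|].
- by rewrite mulr_ge0 // (level_cost_ge0 p_bnd p_sum1 n mu_ge0 mu_sum1).
- apply: le_trans (sum_level_cost_le p_bnd p_sum1 n_ge2 mu_ge0 mu_sum1 K) _.
  by rewrite lerD2l [X in _ <= X]mulrC; apply: ler_wpM2l => //; lra.
- have [K lo] := sum_level_cost_ge p_bnd p_sum1 n_ge2 mu_ge0 mu_sum1.
  exists K; apply: le_trans lo; rewrite lerD2l lerN2 [X in _ <= X]mulrC.
  by apply: ler_wpM2l => //; lra.
Qed.
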